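(* Let $\mathbf{n}=(n_0,\dots,n_L)$ and $\mathbf{A}=(A_1,\dots,A_L)\in\mathsf{Param}(\mathbf{n})$ (merged notation), and let $\mathbf{Q}=(Q_1,\dots,Q_{L-1})$ be the tuple of orthogonal matrices produced by the QR compression algorithm applied to $\mathbf{A}$. Then $\mathbf{Q}^{-1}\cdot\mathbf{A}$ belongs to $\mathsf{Param}^{\rm int}(\mathbf{n})$.
   Context: Merged notation: $\mathsf{Param}(\mathbf{n})=\prod_{i=1}^L\mathbb{R}^{n_i\times(n_{i-1}+1)}$, where $A_i=[\,b_i\ W_i\,]$ combines bias $b_i\in\mathbb{R}^{n_i}$ and weights $W_i\in\mathbb{R}^{n_i\times n_{i-1}}$. Reduced widths: $n^{\rm red}_0=n_0$, $n^{\rm red}_i=\min(n_i,n^{\rm red}_{i-1}+1)$ for $1\le i\le L-1$, $n^{\rm red}_L=n_L$. The group $O(n_1)\times\dots\times O(n_{L-1})$ acts by $\mathbf{Q}\cdot\mathbf{A}=\big(Q_iA_i\begin{bmatrix}1&0\\0&Q_{i-1}^{-1}\end{bmatrix}\big)_{i=1}^L$, with $Q_0=\mathrm{id}_{n_0}$, $Q_L=\mathrm{id}_{n_L}$. $\mathsf{Param}^{\rm int}(\mathbf{n})$ is the subspace of $\mathbf{T}=(T_i)\in\mathsf{Param}(\mathbf{n})$ such that for each $i$ the bottom-left $(n_i-n^{\rm red}_i)\times(1+n^{\rm red}_{i-1})$ block of $T_i$ is zero. QR compression algorithm: $M_1=A_1$; for $i=1,\dots,L-1$: compute a complete QR decomposition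 $M_i=Q_i\,\mathrm{inc}_i\,R_i$ with $Q_i\in O(n_i)$, $R_i$ upper triangular of size $n^{\rm red}_i\times(1+n^{\rm red}_{i-1})$ and $\mathrm{inc}_i:\mathbb{R}^{n^{\rm red}_i}\hookrightarrow\mathbb{R}^{n_i}$ the inclusion into the first coordinates; record $Q_i$ and $R_i$; set $M_{i+1}=A_{i+1}\begin{bmatrix}1&0\\0&Q_i\,\mathrm{inc}_i\end{bmatrix}$. The output is $\mathbf{Q}=(Q_i)$ and $\mathbf{V}=(R_1,\dots,R_{L-1},M_L)$. *)

From mathcomp Require Import all_boot all_order all_algebra.
Set Implicit Arguments. Unset Strict Implicit. Unset Printing Implicit Defensive.
Import GRing.Theory Num.Theory.
Local Open Scope ring_scope.

(* Layers are indexed 1..L.  Widths n : nat -> nat (only n 0 .. n L matter).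
   A parameter A in Param(n) is  A : forall i, 'M_(n i, 1 + n i.-1),
   only the entries A 1 .. A L matter (A i = [b_i W_i]). *)

Definition orthogonal_mx (R : nzRingType) (m : nat) (Q : 'M[R]_m) : Prop :=
  Q^T *m Q = 1%:M.

Definition upper_tri (R : nzRingType) (p q : nat) (M : 'M[R]_(p, q)) : Prop :=
  forall (a : 'I_p) (b : 'I_q), (b < a)%N -> M a b = 0.

Definition incm (R : nzRingType) (m r : nat) : 'M[R]_(m, r) :=
  \matrix_(a < m, b < r) ((a : nat) == b)%:R.

Fixpoint nr (n : nat -> nat) (i : nat) : nat :=
  match i with
  | 0 => n 0
  | k.+1 => minn (n k.+1) (nr n k).+1
  end.

Definition nred (L : nat) (n : nat -> nat) (i : nat) : nat :=
  if i == L then n L else nr n i.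

Definition Qext (R : nzRingType) (L : nat) (n : nat -> nat)
    (Q : forall i, 'M[R]_(n i)) (i : nat) : 'M[R]_(n i) :=
  if (0 < i < L)%N then Q i else 1%:M.

Definition act (R : comUnitRingType) (L : nat) (n : nat -> nat)
    (Q : forall i, 'M[R]_(n i)) (A : forall i, 'M[R]_(n i, 1 + n i.-1))
    (i : nat) : 'M[R]_(n i, 1 + n i.-1) :=
  Qext L Q i *m A i *m block_mx (1%:M : 'M_1) 0 0 (invmx (Qext L Q i.-1)).

Definition Param_int (R : nzRingType) (L : nat) (n : nat -> nat)
    (T : forall i, 'M[R]_(n i, 1 + n i.-1)) : Prop :=
  forall i, (1 <= i <= L)%N ->
    forall (a : 'I_(n i)) (b : 'I_(1 + n i.-1)),
      (nred L n i <= a)%N -> (b < 1 + nred L n i.-1)%N -> T i a b = 0.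

(* The matrices M_i of the QR compression algorithm (i >= 1):
   M_1 = A_1,  M_{k+1} = A_{k+1} [1 0; 0 Q_k inc_k]. *)
Definition qrM (R : nzRingType) (n : nat -> nat)
    (A : forall i, 'M[R]_(n i, 1 + n i.-1)) (Q : forall i, 'M[R]_(n i))
    (i : nat) : 'M[R]_(n i, 1 + nr n i.-1) :=
  match i return 'M[R]_(n i, 1 + nr n i.-1) with
  | 0 => 0
  | k.+1 =>
    match k return 'M[R]_(n k.+1, 1 + nr n k) with
    | 0 => A 1%N
    | k'.+1 => A k'.+2 *m block_mx (1%:M : 'M_1) 0 0 (Q k'.+1 *m @incm R (n k'.+1) (nr n k'.+1))
    end
  end.

(* (Q, Rm) is a valid run of the QR compression algorithm on A:
   for each 1 <= i <= L-1, M_i = Q_i inc_i R_i with Q_i orthogonal,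
   R_i upper triangular of size n^red_i x (1 + n^red_{i-1}). *)
Definition QR_run (R : nzRingType) (L : nat) (n : nat -> nat)
    (A : forall i, 'M[R]_(n i, 1 + n i.-1)) (Q : forall i, 'M[R]_(n i))
    (Rm : forall i, 'M[R]_(nr n i, 1 + nr n i.-1)) : Prop :=
  forall i, (1 <= i < L)%N ->
    [/\ orthogonal_mx (Q i), upper_tri (Rm i)
      & qrM A Q i = Q i *m @incm R (n i) (nr n i) *m Rm i].

From mathcomp Require Import all_boot all_order all_algebra.
Set Implicit Arguments. Unset Strict Implicit. Unset Printing Implicit Defensive.
Import GRing.Theory.
Local Open Scope ring_scope.

(* For 1 <= i < L, the first 1 + n^red_(i-1) columns of (Q^-1 . A)_i are
   (Q^-1 . A)_i diag(1, inc_(i-1)) = Q_i^-1 A_i diag(1, Q_(i-1) inc_(i-1))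
   = Q_i^-1 M_i = inc_i R_i, whose rows below n^red_i vanish.  For i = L the
   condition is empty, since n^red_L = n_L. *)

Local Notation lift1 X := (block_mx (1%:M : 'M_1) 0 0 X).

Lemma mul_lift1 (R : nzRingType) (p q r : nat) (X : 'M[R]_(p, q)) (Y : 'M[R]_(q, r)) :
  lift1 X *m lift1 Y = lift1 (X *m Y).
Proof. by rewrite mulmx_block !mulmx0 !mul0mx !mulmx1 !addr0 !add0r. Qed.

Lemma incm_id (R : nzRingType) (m : nat) : @incm R m m = 1%:M.
Proof. by apply/matrixP => a b; rewrite !mxE. Qed.

Lemma lift1_incm (R : nzRingType) (p q : nat) :
  lift1 (@incm R p q) = @incm R (1 + p) (1 + q).
Proof.
apply/matrixP => j k; rewrite /incm !mxE.
case: (splitP j) => j' ->; rewrite !mxE; case: (splitP k) => k' ->; rewrite !mxE //=.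
- by rewrite (ord1 j').
- by rewrite (ord1 k').
Qed.

Lemma mulmx_incm_entry (R : nzRingType) (m p q : nat) (T : 'M[R]_(m, p))
    (a : 'I_m) (b : 'I_q) (b' : 'I_p) :
  (b : nat) = b' -> (T *m @incm R p q) a b = T a b'.
Proof.
move=> eb; rewrite mxE (bigD1 b') //= big1 ?addr0; first by rewrite mxE eb eqxx mulr1.
by move=> j nj; rewrite mxE eb val_eqE (negbTE nj) mulr0.
Qed.

Lemma incm_mul_row_ge (R : nzRingType) (m r s : nat) (X : 'M[R]_(r, s))
    (a : 'I_m) (c : 'I_s) :
  (r <= a)%N -> (@incm R m r *m X) a c = 0.
Proof.
move=> ra; rewrite mxE big1 // => j _; rewrite mxE.
by case: eqP => [aj | _]; [move: (ltn_ord j); rewrite -aj ltnNge ra | rewrite mul0r].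
Qed.

Lemma Qext_invmx (R : comUnitRingType) (L : nat) (n : nat -> nat)
    (Q : forall i, 'M[R]_(n i)) (i : nat) :
  Qext L (fun j => invmx (Q j)) i = invmx (Qext L Q i).
Proof. by rewrite /Qext; case: ifP; rewrite ?invmx1. Qed.

Lemma act_mul_lift1 (R : comUnitRingType) (L : nat) (n : nat -> nat)
    (Q : forall i, 'M[R]_(n i)) (A : forall i, 'M[R]_(n i, 1 + n i.-1))
    (i k : nat) (X : 'M[R]_(n i.-1, k)) :
  act L Q A i *m lift1 X
  = Qext L Q i *m (A i *m lift1 (invmx (Qext L Q i.-1) *m X)).
Proof. by rewrite /act -!mulmxA mul_lift1. Qed.

Lemma qrM_Qext (R : nzRingType) (L : nat) (n : nat -> nat)
    (A : forall i, 'M[R]_(n i, 1 + n i.-1)) (Q : forall i, 'M[R]_(n i)) (i : nat) :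
  (0 < i < L)%N ->
  qrM A Q i = A i *m lift1 (Qext L Q i.-1 *m @incm R (n i.-1) (nr n i.-1)).
Proof.
case: i => [//|[|k]] /andP[_ iL] /=.
  by rewrite /Qext /= incm_id mulmx1 -scalar_mx_block mulmx1.
by rewrite /Qext /= (ltn_trans _ iL).
Qed.

Lemma nred_lt (L : nat) (n : nat -> nat) (i : nat) :
  (i < L)%N -> nred L n i = nr n i.
Proof. by rewrite /nred => /ltn_eqF ->. Qed.

Lemma act_inv_QR_incm (R : comUnitRingType) (L : nat) (n : nat -> nat)
    (A : forall i, 'M[R]_(n i, 1 + n i.-1)) (Q : forall i, 'M[R]_(n i))
    (Rm : forall i, 'M[R]_(nr n i, 1 + nr n i.-1)) (i : nat) :
  QR_run L A Q Rm -> (0 < i < L)%N ->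
  act L (fun j => invmx (Q j)) A i *m @incm R (1 + n i.-1) (1 + nr n i.-1)
  = @incm R (n i) (nr n i) *m Rm i.
Proof.
move=> run iL; have [orthQ _ defM] := run i iL.
have [_ Qunit] := mulmx1_unit orthQ.
rewrite -lift1_incm act_mul_lift1 !Qext_invmx invmxK -qrM_Qext // defM.
by rewrite /Qext iL -!mulmxA mulKmx.
Qed.

Theorem proposition3 (R : realFieldType) (L : nat) (n : nat -> nat)
    (A : forall i, 'M[R]_(n i, 1 + n i.-1))
    (Q : forall i, 'M[R]_(n i))
    (Rm : forall i, 'M[R]_(nr n i, 1 + nr n i.-1)) :
  QR_run L A Q Rm ->
  Param_int L (act L (fun i => invmx (Q i)) A).
Proof.
move=> run i /andP[i_gt0 i_leL] a b.
have [iL | L_le_i] := ltnP i L; last first.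
  have /eqP iL : i == L by rewrite eqn_leq i_leL L_le_i.
  by subst L; rewrite /nred eqxx leqNgt ltn_ord.
rewrite !nred_lt ?(leq_ltn_trans (leq_pred i)) // => ra bb.
rewrite -(mulmx_incm_entry _ a (b := Ordinal bb)) //.
by rewrite (act_inv_QR_incm run) ?incm_mul_row_ge ?i_gt0.
Qed.
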